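(* For the additive noise model with $N$ items and $K$ defectives and the random Bernoulli$(1/K)$ design, in the regime $N,K\to\infty$ with $K=o(N)$, a necessary condition on the number of tests is $$T=\Omega\!\left(\frac{K\log\frac{N}{K}}{2(1-q)+\ln\frac{1}{q}}\right),$$ where $q$ is the parameter of the Bernoulli noise; namely, if $T=o\!\left(\frac{K\log\frac{N}{K}}{2(1-q)+\ln\frac1q}\right)$ then the error probability approaches $1$.
   Context: Design: $N\times T$ binary matrix with i.i.d. Bernoulli$(1/K)$ entries, $X_j(t)=1$ iff item $j$ is in test $t$. Additive noise model: for defective set $S$ ($|S|=K$, uniformly distributed among $K$-subsets), $Y(t)=\left(\bigvee_{j\in S}X_j(t)\right)\vee W(t)$ with $W(t)$ i.i.d. Bernoulli$(q)$, $q\in(0,1)$, independent of the design. The error probability is that of any decoder estimating $S$ from the outcomes $Y^T$ and the design. *)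

From HB Require Import structures.
From mathcomp Require Import all_boot all_order all_algebra.
From mathcomp Require Import all_classical all_reals all_analysis.
Set Implicit Arguments. Unset Strict Implicit. Unset Printing Implicit Defensive.
Import Order.TTheory GRing.Theory Num.Theory.
Local Open Scope ring_scope.

(* A test design: X (j, t) = true iff item j is in test t. *)
Definition design (N T : nat) := {ffun 'I_N * 'I_T -> bool}.
Definition noise (T : nat) := {ffun 'I_T -> bool}.

Definition outcome (N T : nat) (X : design N T) (S : {set 'I_N}) (W : noise T)
  : {ffun 'I_T -> bool} :=
  [ffun t => [exists j in S, X (j, t)] || W t].

Definition decoder (N T : nat) := design N T -> {ffun 'I_T -> bool} -> {set 'I_N}.

Definition bern {R : realType} (p : R) (b : bool) : R := if b then p else 1 - p.

Definition design_prob {R : realType} (N K T : nat) (X : design N T) : R :=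
  \prod_(jt : 'I_N * 'I_T) bern ((K%:R : R)^-1) (X jt).

Definition noise_prob {R : realType} (T : nat) (q : R) (W : noise T) : R :=
  \prod_(t : 'I_T) bern q (W t).

Definition ksets (N K : nat) : {set {set 'I_N}} := [set S : {set 'I_N} | #|S| == K].

Definition error_prob {R : realType} (N K T : nat) (q : R) (dec : decoder N T) : R :=
  \sum_(S in ksets N K) \sum_(X : design N T) \sum_(W : noise T)
     ((#|ksets N K|%:R : R)^-1 * design_prob K X * noise_prob q W
       * ((dec X (outcome X S W) != S)%:R)).

From HB Require Import structures.
From mathcomp Require Import all_boot all_order all_algebra.
From mathcomp Require Import all_classical all_reals all_analysis.
From mathcomp Require Import ring lra.
Import Order.TTheory GRing.Theory Num.Theory.
Import numFieldNormedType.Exports.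
Local Open Scope ring_scope.

(* Counting bound: whatever the noise, at most 2^T of the C(N,K) candidate
   defective sets can be decoded correctly from T binary outcomes, so the
   error probability is at least 1 - 2^T / C(N,K) >= 1 - 2^T (K/N)^K.
   Under the hypothesis on T we have T ln 2 <= (K/2) ln(N/K), which makes
   this bound at least 1 - exp(-K/2) >= 1 - 2/K, and K grows without bound. *)

Lemma card_decoded_le {aT rT : finType} (f : aT -> rT) (g : rT -> aT) (A : {pred aT}) :
  (#|[pred x in A | g (f x) == x]| <= #|rT|)%N.
Proof.
apply: (@leq_trans #|codom g|); last exact: leq_image_card.
by apply: subset_leq_card; apply/fintype.subsetP => x /andP[_ /eqP <-]; exact: codom_f.
Qed.

Lemma leq_exp_bin (N K : nat) : (K <= N)%N -> (N ^ K <= 'C(N, K) * K ^ K)%N.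
Proof.
move=> le_KN.
have ffact_ratio m : (N ^ m * K ^_ m <= N ^_ m * K ^ m)%N.
  elim: m => [|m IHm]; first by rewrite !expn0 !ffactn0.
  have step : (N * (K - m) <= (N - m) * K)%N.
    by rewrite mulnBr mulnBl leq_sub2l // mulnC leq_mul.
  rewrite !expnS !ffactnSr.
  have -> : (N * N ^ m * (K ^_ m * (K - m)) = N ^ m * K ^_ m * (N * (K - m)))%N
    by ring.
  have -> : (N ^_ m * (N - m) * (K * K ^ m) = N ^_ m * K ^ m * ((N - m) * K))%N
    by ring.
  exact: leq_mul.
have := ffact_ratio K; rewrite ffactnn -bin_ffact.
rewrite [('C(N, K) * K`! * K ^ K)%N]mulnC mulnA [(K ^ K * 'C(N, K))%N]mulnC.
by rewrite leq_pmul2r // fact_gt0.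
Qed.

Lemma expRN_half_le {R : realType} (x : R) : 0 < x -> expR (- (x / 2)) <= 2 / x.
Proof.
move=> x_gt0; rewrite expRN -[2 / x]invf_div lef_pV2 ?posrE ?expR_gt0 ?divr_gt0 //.
by apply: le_trans (expR_ge1Dx _); rewrite lerDr.
Qed.

Section BernoulliProducts.
Variable R : realType.

Lemma bern_ge0 (p : R) (b : bool) : 0 <= p <= 1 -> 0 <= bern p b.
Proof. by case/andP=> p_ge0 p_le1; case: b => //=; rewrite subr_ge0. Qed.

Lemma sum_bern (p : R) : \sum_(b : bool) bern p b = 1.
Proof. by rewrite big_bool /= addrC subrK. Qed.

Lemma sum_prod_bern (I : finType) (p : R) :
  \sum_(f : {ffun I -> bool}) \prod_(i : I) bern p (f i) = 1.
Proof.
rewrite -(bigA_distr_bigA (fun (i : I) (b : bool) => bern p b)) /=.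
by rewrite big1 // => i _; rewrite sum_bern.
Qed.

Lemma invn_01 (K : nat) : 0 <= (K%:R : R)^-1 <= 1.
Proof.
case: K => [|k]; first by rewrite invr0 lexx ler01.
by rewrite invr_ge0 ler0n /= invf_le1 ?ltr0Sn // ler1n.
Qed.

Lemma design_prob_ge0 (N K T : nat) (X : design N T) : 0 <= design_prob K X :> R.
Proof. by apply: prodr_ge0 => jt _; apply: bern_ge0; exact: invn_01. Qed.

Lemma noise_prob_ge0 (T : nat) (q : R) (W : noise T) :
  0 <= q <= 1 -> 0 <= noise_prob q W.
Proof. by move=> q01; apply: prodr_ge0 => t _; exact: bern_ge0. Qed.

Lemma sum_design_prob (N K T : nat) : \sum_(X : design N T) design_prob K X = 1 :> R.
Proof. exact: sum_prod_bern. Qed.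

Lemma sum_noise_prob (T : nat) (q : R) : \sum_(W : noise T) noise_prob q W = 1.
Proof. exact: sum_prod_bern. Qed.

End BernoulliProducts.

Lemma card_ksets (N K : nat) : #|ksets N K| = 'C(N, K).
Proof. by rewrite card_draws card_ord. Qed.

Section SuccessProbability.
Context {R : realType} {N T : nat}.
Variables (K : nat) (q : R) (dec : decoder N T).
Hypothesis q01 : 0 <= q <= 1.

Definition success_prob : R :=
  \sum_(S in ksets N K) \sum_(X : design N T) \sum_(W : noise T)
     ((#|ksets N K|%:R : R)^-1 * design_prob K X * noise_prob q W
       * ((dec X (outcome X S W) == S)%:R)).

Lemma error_probE : (0 < #|ksets N K|)%N -> error_prob K q dec = 1 - success_prob.
Proof.
move=> ksets_gt0; set c : R := (#|ksets N K|%:R)^-1.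
have total : \sum_(S in ksets N K) \sum_(X : design N T) \sum_(W : noise T)
    (c * design_prob K X * noise_prob q W) = 1.
  under eq_bigr => S _.
    under eq_bigr => X _ do rewrite -mulr_sumr sum_noise_prob mulr1.
    over.
  rewrite /= -mulr_sumr sum_design_prob mulr1 sumr_const -mulr_natr mulVf //.
  by rewrite pnatr_eq0 -lt0n.
rewrite -[in RHS]total /error_prob /success_prob -/c.
rewrite -sumrB; apply: eq_bigr => S _; rewrite -sumrB; apply: eq_bigr => X _.
rewrite -sumrB; apply: eq_bigr => W _.
by case: eqP => _ /=; rewrite ?mulr1 ?mulr0 ?subr0 ?subrr.
Qed.

Lemma success_prob_ge0 : 0 <= success_prob.
Proof.
apply: sumr_ge0 => S _; apply: sumr_ge0 => X _; apply: sumr_ge0 => W _.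
by rewrite !mulr_ge0 ?invr_ge0 ?ler0n ?design_prob_ge0 ?noise_prob_ge0.
Qed.

Lemma success_prob_le : success_prob <= 2%:R ^+ T / #|ksets N K|%:R.
Proof.
set c : R := (#|ksets N K|%:R)^-1.
have decoded X W : \sum_(S in ksets N K) ((dec X (outcome X S W) == S)%:R : R)
    <= 2%:R ^+ T.
  rewrite -natr_sum -natrX ler_nat -big_mkcondr /= sum1_card.
  have := card_decoded_le (fun S => outcome X S W) (dec X) (ksets N K).
  by rewrite card_ffun card_bool card_ord.
rewrite /success_prob -/c exchange_big /=.
under eq_bigr => X _ do rewrite exchange_big /=.
apply: (@le_trans _ _ (\sum_(X : design N T) \sum_(W : noise T)
    c * design_prob K X * noise_prob q W * 2%:R ^+ T)).
  apply: ler_sum => X _; apply: ler_sum => W _; rewrite -mulr_sumr.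
  by rewrite ler_wpM2l ?mulr_ge0 ?invr_ge0 ?ler0n ?design_prob_ge0 ?noise_prob_ge0.
under eq_bigr => X _ do rewrite -mulr_suml -mulr_sumr sum_noise_prob mulr1.
by rewrite -mulr_suml -mulr_sumr sum_design_prob mulr1 mulrC.
Qed.

Lemma error_prob_dist_le :
  (0 < #|ksets N K|)%N -> `|1 - error_prob K q dec| <= 2%:R ^+ T / #|ksets N K|%:R.
Proof.
move=> ksets_gt0; rewrite error_probE // subKr ger0_norm ?success_prob_ge0 //.
exact: success_prob_le.
Qed.

End SuccessProbability.

Lemma ratio_exp_le_bin {R : realFieldType} (N K : nat) :
  (0 < K <= N)%N -> (N%:R / K%:R : R) ^+ K <= 'C(N, K)%:R.
Proof.
case/andP=> K_gt0 le_KN.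
rewrite expr_div_n ler_pdivrMr ?exprn_gt0 ?ltr0n // -!natrX -natrM ler_nat.
exact: leq_exp_bin.
Qed.

Lemma leq_of_ratio_ge1 {R : realFieldType} (m n : nat) :
  (0 < m)%N -> 1 <= n%:R / m%:R :> R -> (m <= n)%N.
Proof. by move=> m_gt0; rewrite ler_pdivlMr ?ltr0n // mul1r ler_nat. Qed.

Lemma exp2_div_bin_le {R : realType} {N K T : nat} :
  (0 < K <= N)%N -> expR 1 <= N%:R / K%:R :> R ->
  T%:R * ln 2 <= K%:R * ln (N%:R / K%:R) / 2 :> R ->
  2%:R ^+ T / 'C(N, K)%:R <= 2 / K%:R :> R.
Proof.
move=> /[dup] K_range /andP[K_gt0 le_KN] e_le_b hT; set b : R := N%:R / K%:R in e_le_b hT *.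
have k_gt0 : 0 < K%:R :> R by rewrite ltr0n.
have b_gt0 : 0 < b := lt_le_trans (expR_gt0 1) e_le_b.
have ln_b_ge1 : 1 <= ln b by rewrite -(expRK 1) ler_ln ?posrE ?expR_gt0.
have bK_le : b ^+ K <= 'C(N, K)%:R by exact: ratio_exp_le_bin.
have exp2 : 2%:R ^+ T = expR (T%:R * ln 2) :> R.
  by rewrite -[LHS]lnK ?posrE ?exprn_gt0 ?ltr0n // lnXn ?ltr0n // mulr_natl.
have expb : b ^+ K = expR (K%:R * ln b).
  by rewrite -[LHS]lnK ?posrE ?exprn_gt0 // lnXn // mulr_natl.
apply: le_trans (expRN_half_le _ k_gt0).
apply: (@le_trans _ _ (2%:R ^+ T / b ^+ K)).
  rewrite ler_wpM2l ?exprn_ge0 ?ler0n // lef_pV2 ?posrE ?exprn_gt0 ?ltr0n ?bin_gt0 //.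
rewrite exp2 expb -expRN -expRD ler_expR.
have : K%:R <= K%:R * ln b :> R by rewrite ler_peMr // ltW.
lra.
Qed.

Lemma ln2_bound_of_ratio {R : realType} (t L c : R) : 0 < L -> 0 < c ->
  t / (L / c) <= c / (2 * ln 2) -> t * ln 2 <= L / 2.
Proof.
move=> L_gt0 c_gt0; have ln2_gt0 : 0 < ln 2 :> R by rewrite ln_gt0 // ltr1n.
rewrite ler_pdivrMr ?divr_gt0 // mulrAC ler_pdivlMr ?mulr_gt0 //.
have -> : c * (L / c) = L by rewrite mulrC divfK ?gt_eqF.
by rewrite ler_pdivlMr // -mulrA (mulrC _ 2).
Qed.

Lemma expR1_le_inv {R : realType} (x : R) : 0 < x -> x <= expR (-1) -> expR 1 <= x^-1.
Proof.
by move=> x_gt0 x_le; rewrite -[expR 1]invrK -expRN lef_pV2 ?posrE ?expR_gt0.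
Qed.

Lemma error_prob_dist_le_few_tests {R : realType} {N K T : nat} (q c : R) (dec : decoder N T) :
  0 <= q <= 1 -> 0 < c -> (0 < K)%N -> (0 < N)%N ->
  K%:R / N%:R <= expR (-1) :> R ->
  T%:R / (K%:R * ln (N%:R / K%:R) / c) <= c / (2 * ln 2) ->
  `|1 - error_prob K q dec| <= 2 / K%:R.
Proof.
move=> q01 c_gt0 K_gt0 N_gt0 KN_le T_le.
have e_le_ratio : expR 1 <= N%:R / K%:R :> R.
  by rewrite -invf_div expR1_le_inv // divr_gt0 ?ltr0n.
have K_range : (0 < K <= N)%N.
  rewrite K_gt0 (leq_of_ratio_ge1 (R := R)) // (le_trans _ e_le_ratio) //.
  by rewrite -expR0 ler_expR.
have L_gt0 : 0 < K%:R * ln (N%:R / K%:R) :> R.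
  by rewrite mulr_gt0 ?ltr0n // ln_gt0 // (lt_le_trans _ e_le_ratio) // expR_gt1.
apply: le_trans (error_prob_dist_le K q dec q01 _) _.
  by rewrite card_ksets bin_gt0; case/andP: K_range.
rewrite card_ksets; apply: exp2_div_bin_le K_range e_le_ratio _.
exact: ln2_bound_of_ratio L_gt0 c_gt0 T_le.
Qed.

Local Open Scope classical_set_scope.

Theorem theorem8 (R : realType) (q : R) (hq0 : 0 < q) (hq1 : q < 1)
  (N K T : nat -> nat)
  (hN : (fun n => (N n)%:R : R) @ \oo --> +oo)
  (hK : (fun n => (K n)%:R : R) @ \oo --> +oo)
  (hKN : (fun n => (K n)%:R / (N n)%:R : R) @ \oo --> 0)
  (hT : (fun n => (T n)%:R /
          ((K n)%:R * ln ((N n)%:R / (K n)%:R) / (2 * (1 - q) + ln q^-1)) : R)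
          @ \oo --> 0)
  (dec : forall n, decoder (N n) (T n)) :
  (fun n => error_prob (K n) q (dec n)) @ \oo --> (1 : R).
Proof.
set c := 2 * (1 - q) + ln q^-1 in hT.
have c_gt0 : 0 < c.
  have : 0 < ln q^-1 by rewrite ln_gt0 // invf_gt1.
  rewrite /c; lra.
have ln2_gt0 : 0 < ln 2 :> R by rewrite ln_gt0 // ltr1n.
apply/cvgrPdist_le => e e_gt0.
move/cvgryPge in hK; move/cvgryPge in hN.
move/cvgrPdist_le/(_ _ (expR_gt0 (-1))) in hKN.
move/cvgrPdist_le/(_ _ (divr_gt0 c_gt0 (mulr_gt0 (ltr0n R 2) ln2_gt0))) in hT.
near=> n.
have K_gt0 : (0 < K n)%N by rewrite -(ler1n R); near: n; apply: hK.
have N_gt0 : (0 < N n)%N by rewrite -(ler1n R); near: n; apply: hN.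
have K_ge : 2 / e <= (K n)%:R by near: n; apply: hK.
apply: le_trans (error_prob_dist_le_few_tests q c (dec n) _ c_gt0 K_gt0 N_gt0 _ _) _.
- by rewrite !ltW.
- by apply: le_trans (ler_norm _) _; rewrite -normrN -sub0r; near: n.
- by apply: le_trans (ler_norm _) _; rewrite -normrN -sub0r; near: n.
by rewrite ler_pdivrMr ?ltr0n // mulrC -ler_pdivrMr.
Unshelve. all: by end_near.
Qed.
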